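(* Let $\alpha\in\mathbb{C}$, $s\in\mathbb{C}\setminus\{0\}$, and for index $n$ consider the discrete system for $(f_n,g_n)$ \[ f_{n+1}f_n=\frac{g_n^2-(\alpha+2n)g_n+(\alpha+n)n}{g_n^2},\qquad g_{n-1}+g_n=\frac{(1-\alpha+s-2n)f_n+\alpha+2n+1}{(f_n-1)^2}, \] together with the differential system in $s$ \[ \frac{df}{ds}=\frac{2f^2g-4fg+(\alpha-s+2n)f+2g-\alpha-2n}{s},\qquad \frac{dg}{ds}=\frac{g^2(1-f^2)-(\alpha+2n)g+(\alpha+n)n}{sf}. \] Define the birational change of variables and parameter identification \[ q=\frac{(f-1)(fg-g+n)}{sf},\qquad p=\frac{s(g-n)}{fg-g+n},\qquad t=s, \] \[ a_0=\alpha+n,\quad a_1=-n,\quad a_2=n,\quad a_3=1-\alpha-n \] (so that $a_1+a_2=0$). Then this change of variables simultaneously transforms the discrete system into the special case $a_1+a_2=0$ of the discrete Painlev\'e equation \[ q_{n+1}=1-q_n-\frac{a_0}{p_n+t}-\frac{a_2}{p_n},\qquad p_{n-1}=-p_n-t+\frac{a_1}{q_n}+\frac{a_3}{q_n-1}, \] with parameter evolution $n\mapsto n+1$ given by $(a_0,a_1,a_2,a_3)\mapsto(a_0+1,a_1-1,a_2+1,a_3-1)$, and transforms the differential system into the Hamiltonian system \[ \frac{dq}{dt}=\frac{1}{t}\Big(q(q-1)(2p+t)-a_1(q-1)-a_3q\Big),\qquad \frac{dp}{dt}=\frac{1}{t}\Big(p(p+t)(1-2q)+(a_1+a_3)p-a_2t\Big).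 \]
   Context: The discrete system arises from ladder operators for polynomials orthogonal with respect to the Laguerre weight $x^\alpha e^{-x}$ on $[0,s]$. The Hamiltonian system is a Hamiltonian form of the fifth Painlev\'e equation, with parameters normalised by $a_0+a_1+a_2+a_3=1$. *)

From mathcomp Require Import all_boot all_algebra.
From mathcomp Require Import all_classical all_reals all_analysis.
From mathcomp Require Import complex.
Import GRing.Theory Num.Theory numFieldNormedType.Exports.
Local Open Scope ring_scope.

(* The complex numbers, seen as a numFieldType (hence a normed module over
   itself, so that derivatives are complex derivatives). *)
Definition Cp (R : realType) : numFieldType := R[i].

Section Defs.
Variable R : realType.
Local Notation C := (Cp R).

Definition qv (n : nat) (s f g : C) : C :=
  (f - 1) * (f * g - g + n%:R) / (s * f).
Definition pv (n : nat) (s f g : C) : C :=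
  s * (g - n%:R) / (f * g - g + n%:R).

Definition a0 (alpha : C) (n : nat) : C := alpha + n%:R.
Definition a1 (n : nat) : C := - n%:R.
Definition a2 (n : nat) : C := n%:R.
Definition a3 (alpha : C) (n : nat) : C := 1 - alpha - n%:R.
End Defs.
Arguments qv {R}.
Arguments pv {R}.
Arguments a0 {R}.
Arguments a1 {R}.
Arguments a2 {R}.
Arguments a3 {R}.

From mathcomp Require Import all_boot all_algebra.
From mathcomp Require Import all_classical all_reals all_analysis.
From mathcomp Require Import complex.
From mathcomp Require Import ring.
Import GRing.Theory Num.Theory numFieldNormedType.Exports.
Local Open Scope ring_scope.

(* Both halves are identities between rational functions once the system is
   used to eliminate variables.  In the discrete case the first equation gives
   f_{n+1} f_n and the second then g_{n+1} + g_n, so the shifted q and p become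
   rational in (f_n, g_n) resp. (f_{n+1}, g_{n+1}).  In the continuous case the
   quotient rule expresses dq/dt and dp/dt through f' and g', which the system
   gives in closed form.  The nonvanishing hypotheses are exactly the side
   conditions of these field identities; note that q, p != 0 already force the
   factors of their numerators and denominators to be nonzero. *)

Section ChangeOfVariables.
Context {K : fieldType}.

Definition qmap (m s f g : K) : K := (f - 1) * (f * g - g + m) / (s * f).
Definition pmap (m s f g : K) : K := s * (g - m) / (f * g - g + m).

Lemma pmap_neq0 {m s f g : K} : pmap m s f g != 0 ->
  [/\ s != 0, g - m != 0 & f * g - g + m != 0].
Proof.
rewrite /pmap !mulf_eq0 invr_eq0 !negb_or.
by case/andP => /andP [? ?] ?.
Qed.

Lemma qmap_neq0 {m s f g : K} : qmap m s f g != 0 ->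
  [/\ s != 0, f != 0, f - 1 != 0 & f * g - g + m != 0].
Proof.
rewrite /qmap !mulf_eq0 invr_eq0 mulf_eq0 !negb_or.
by case/andP => /andP [? ?] /andP [? ?]; split.
Qed.

Lemma neq0_of_eq (x y : K) : x = y -> y != 0 -> x != 0.
Proof. by move=> ->. Qed.

Lemma qmap_succ {a m s f0 g0 f1 g1 : K} :
  f0 != 0 -> g0 != 0 -> f1 != 0 -> f1 != 1 ->
  pmap m s f0 g0 != 0 -> pmap m s f0 g0 + s != 0 ->
  f1 * f0 = (g0 ^+ 2 - (a + 2 * m) * g0 + (a + m) * m) / g0 ^+ 2 ->
  g0 + g1 = ((1 - a + s - 2 * (m + 1)) * f1 + a + 2 * (m + 1) - 1) / (f1 - 1) ^+ 2 ->
  qmap (m + 1) s f1 g1 =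
    1 - qmap m s f0 g0 - (a + m) / (pmap m s f0 g0 + s) - m / pmap m s f0 g0.
Proof.
move=> f0_neq0 g0_neq0 f1_neq0 f1_neq1 p_neq0 ps_neq0 eq_f eq_g.
have [s_neq0 gm_neq0 d_neq0] := pmap_neq0 p_neq0.
set E := g0 ^+ 2 - _ + _ in eq_f.
set N := (1 - a + s - _) * f1 + _ + _ - 1 in eq_g.
have E_eq : E = f1 * f0 * g0 ^+ 2 by rewrite eq_f divfK // expf_neq0.
have ps_eq : pmap m s f0 g0 + s = (s * (g0 - m) + s * (f0 * g0 - g0 + m)) / (f0 * g0 - g0 + m).
  by rewrite /pmap; field.
have sum_neq0 : s * (g0 - m) + s * (f0 * g0 - g0 + m) != 0.
  by apply: contra ps_neq0; rewrite ps_eq => /eqP ->; rewrite mul0r.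
have E_neq0 : E != 0 by rewrite E_eq !mulf_neq0 // expf_neq0.
have E1_neq0 : E - g0 ^+ 2 * f0 != 0.
  have -> : E - g0 ^+ 2 * f0 = (f1 - 1) * f0 * g0 ^+ 2 by rewrite E_eq; ring.
  by rewrite !mulf_neq0 ?subr_eq0 // expf_neq0.
rewrite /qmap /pmap.
have -> : g1 = N / (f1 - 1) ^+ 2 - g0 by rewrite -eq_g addrC addKr.
rewrite /N; have -> : f1 = E / g0 ^+ 2 / f0 by rewrite -eq_f mulfK.
rewrite /E; field.
by rewrite -/E mulN1r d_neq0 gm_neq0 s_neq0 sum_neq0 f0_neq0 g0_neq0 E_neq0 E1_neq0.
Qed.

Lemma pmap_pred {a m s f0 g0 f1 g1 : K} :
  f0 != 0 -> g0 != 0 -> f0 * g0 - g0 + m != 0 ->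
  qmap (m + 1) s f1 g1 != 0 -> qmap (m + 1) s f1 g1 != 1 ->
  f1 * f0 = (g0 ^+ 2 - (a + 2 * m) * g0 + (a + m) * m) / g0 ^+ 2 ->
  g0 + g1 = ((1 - a + s - 2 * (m + 1)) * f1 + a + 2 * (m + 1) - 1) / (f1 - 1) ^+ 2 ->
  pmap m s f0 g0 =
    - pmap (m + 1) s f1 g1 - s + (- (m + 1)) / qmap (m + 1) s f1 g1
    + (1 - a - (m + 1)) / (qmap (m + 1) s f1 g1 - 1).
Proof.
move=> f0_neq0 g0_neq0 d0_neq0 q_neq0 q_neq1 eq_f eq_g.
have [s_neq0 f1_neq0 f11_neq0 d1_neq0] := qmap_neq0 q_neq0.
have sf1_neq0 : s * f1 != 0 by rewrite mulf_neq0.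
have q1_neq0 : (f1 - 1) * (f1 * g1 - g1 + (m + 1)) - s * f1 != 0.
  apply: contra q_neq1 => /eqP q1_eq0.
  by rewrite /qmap -[(f1 - 1) * _](subrK (s * f1)) q1_eq0 add0r divff.
set E := g0 ^+ 2 - _ + _ in eq_f.
set N := (1 - a + s - _) * f1 + _ + _ - 1 in eq_g.
have E_eq : E = f1 * f0 * g0 ^+ 2 by rewrite eq_f divfK // expf_neq0.
have N_eq : N = (g0 + g1) * (f1 - 1) ^+ 2 by rewrite eq_g divfK // expf_neq0.
rewrite /qmap /pmap.
have -> : g1 = N / (f1 - 1) ^+ 2 - g0 by rewrite -eq_g addrC addKr.
have -> : f0 = E / g0 ^+ 2 / f1 by rewrite -eq_f [f1 * f0]mulrC mulfK.
rewrite /E /N; field.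
rewrite -/E -/N E_eq N_eq f1_neq0 s_neq0 f11_neq0 g0_neq0 /=.
apply/and3P; split.
- apply: (@neq0_of_eq _ ((f1 - 1) * ((f1 - 1) * (f1 * g1 - g1 + (m + 1)) - s * f1))); first ring.
  exact: mulf_neq0.
- apply: (@neq0_of_eq _ ((f1 - 1) ^+ 2 * (f1 * g1 - g1 + (m + 1)))); first ring.
  by rewrite mulf_neq0 ?expf_neq0.
- apply: (@neq0_of_eq _ (f1 * g0 * (f0 * g0 - g0 + m))); first ring.
  by rewrite !mulf_neq0.
Qed.

End ChangeOfVariables.

Section HamiltonianFlow.
Context {K : numFieldType}.

Lemma is_derive_div {u v : K -> K} {x du dv : K} :
  is_derive x 1 u du -> is_derive x 1 v dv -> v x != 0 ->
  is_derive x 1 (fun t => u t / v t) ((du - u x / v x * dv) / v x).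
Proof.
move=> u' v' vx_neq0.
have v_derivable : derivable v x 1 by case: v'.
have inv_v' : is_derive x 1 (fun t => (v t)^-1) (- (v x) ^- 2 * dv).
  apply: DeriveDef; first exact: derivableV.
  by rewrite deriveV // derive_val.
apply: is_derive_eq (is_deriveM u' inv_v') _.
by rewrite /GRing.scale /=; field.
Qed.

Variables (m s df dg : K) (f g : K -> K).
Hypotheses (f' : is_derive s 1 f df) (g' : is_derive s 1 g dg).

Lemma is_derive_common_factor :
  is_derive s 1 (fun t => f t * g t - g t + m) (g s * df + (f s - 1) * dg).
Proof.
apply: is_derive_eq (is_deriveD (is_deriveB (is_deriveM f' g') g') (is_derive_cst m s 1)) _.
by rewrite /GRing.scale /=; ring.
Qed.

Lemma is_derive_qmap : s != 0 -> f s != 0 ->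
  is_derive s 1 (fun t => qmap m t (f t) (g t))
    ((df * (f s * g s - g s + m) + (f s - 1) * (g s * df + (f s - 1) * dg)
      - qmap m s (f s) (g s) * (f s + s * df)) / (s * f s)).
Proof.
move=> s_neq0 fs_neq0; rewrite /qmap.
have num' : is_derive s 1 (fun t => (f t - 1) * (f t * g t - g t + m)) _ :=
  is_deriveM (is_deriveB f' (is_derive_cst (1 : K) s 1)) is_derive_common_factor.
have den' : is_derive s 1 (fun t => t * f t) _ := is_deriveM (is_derive_id s 1) f'.
apply: is_derive_eq (is_derive_div num' den' (mulf_neq0 s_neq0 fs_neq0)) _.
by rewrite !fctE /GRing.scale /=; field; apply/andP.
Qed.

Lemma is_derive_pmap : f s * g s - g s + m != 0 ->
  is_derive s 1 (fun t => pmap m t (f t) (g t))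
    ((g s - m + s * dg - pmap m s (f s) (g s) * (g s * df + (f s - 1) * dg))
      / (f s * g s - g s + m)).
Proof.
move=> d_neq0; rewrite /pmap.
have num' : is_derive s 1 (fun t => t * (g t - m)) _ :=
  is_deriveM (is_derive_id s 1) (is_deriveB g' (is_derive_cst m s 1)).
apply: is_derive_eq (is_derive_div num' is_derive_common_factor d_neq0) _.
by rewrite !fctE /GRing.scale /=; field.
Qed.

Lemma hamiltonian_flow (alpha : K) : s != 0 -> f s != 0 -> f s * g s - g s + m != 0 ->
  df = (2 * f s ^+ 2 * g s - 4 * f s * g s + (alpha - s + 2 * m) * f s
        + 2 * g s - alpha - 2 * m) / s ->
  dg = (g s ^+ 2 * (1 - f s ^+ 2) - (alpha + 2 * m) * g s + (alpha + m) * m) / (s * f s) ->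
  let q := qmap m s (f s) (g s) in
  let p := pmap m s (f s) (g s) in
  is_derive s 1 (fun t => qmap m t (f t) (g t))
    ((q * (q - 1) * (2 * p + s) - (- m) * (q - 1) - (1 - alpha - m) * q) / s) /\
  is_derive s 1 (fun t => pmap m t (f t) (g t))
    ((p * (p + s) * (1 - 2 * q) + (- m + (1 - alpha - m)) * p - m * s) / s).
Proof.
move=> s_neq0 fs_neq0 d_neq0 df_eq dg_eq q p; split.
- apply: is_derive_eq (is_derive_qmap s_neq0 fs_neq0) _.
  by rewrite /q /p /qmap /pmap df_eq dg_eq; field; apply/and3P.
- apply: is_derive_eq (is_derive_pmap d_neq0) _.
  by rewrite /q /p /qmap /pmap df_eq dg_eq; field; apply/and3P.
Qed.

End HamiltonianFlow.

Theorem proposition4p11 (R : realType) (alpha : Cp R) :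
  (* discrete part: s fixed, sequences f_n, g_n *)
  (forall (s : Cp R) (f g : nat -> Cp R),
    s != 0 ->
    (forall n, f n != 0) -> (forall n, f n != 1) -> (forall n, g n != 0) ->
    (forall n, f n * g n - g n + n%:R != 0) ->
    (forall n, pv n s (f n) (g n) != 0) ->
    (forall n, pv n s (f n) (g n) + s != 0) ->
    (forall n, qv n s (f n) (g n) != 0) ->
    (forall n, qv n s (f n) (g n) != 1) ->
    (forall n, f n.+1 * f n =
       (g n ^+ 2 - (alpha + 2 * n%:R) * g n + (alpha + n%:R) * n%:R) / g n ^+ 2) ->
    (forall n, (0 < n)%N ->
       g n.-1 + g n =
       ((1 - alpha + s - 2 * n%:R) * f n + alpha + 2 * n%:R - 1) / (f n - 1) ^+ 2) ->
    (forall n,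
       qv n.+1 s (f n.+1) (g n.+1) =
       1 - qv n s (f n) (g n) - a0 alpha n / (pv n s (f n) (g n) + s)
         - @a2 R n / pv n s (f n) (g n)) /\
    (forall n, (0 < n)%N ->
       pv n.-1 s (f n.-1) (g n.-1) =
       - pv n s (f n) (g n) - s + @a1 R n / qv n s (f n) (g n)
         + a3 alpha n / (qv n s (f n) (g n) - 1)))
  /\
  (* differential part: n fixed, f, g functions of s *)
  (forall (n : nat) (f g : Cp R -> Cp R) (s df dg : Cp R),
    s != 0 -> f s != 0 -> f s * g s - g s + n%:R != 0 ->
    is_derive s 1 f df -> is_derive s 1 g dg ->
    df = (2 * f s ^+ 2 * g s - 4 * f s * g s + (alpha - s + 2 * n%:R) * f s
          + 2 * g s - alpha - 2 * n%:R) / s ->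
    dg = (g s ^+ 2 * (1 - f s ^+ 2) - (alpha + 2 * n%:R) * g s
          + (alpha + n%:R) * n%:R) / (s * f s) ->
    let q := qv n s (f s) (g s) in
    let p := pv n s (f s) (g s) in
    is_derive s 1 (fun t => qv n t (f t) (g t))
      ((q * (q - 1) * (2 * p + s) - @a1 R n * (q - 1) - a3 alpha n * q) / s) /\
    is_derive s 1 (fun t => pv n t (f t) (g t))
      ((p * (p + s) * (1 - 2 * q) + (@a1 R n + a3 alpha n) * p - @a2 R n * s) / s)).
Proof.
split=> [s f g _ f_neq0 f_neq1 g_neq0 d_neq0 p_neq0 ps_neq0 q_neq0 q_neq1 eq_f eq_g|]; last first.
  by move=> n f g s df dg s_neq0 fs_neq0 d_neq0 f' g'; exact: hamiltonian_flow.
split=> [n | [//|n] _].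
- have := qmap_succ (g1 := g n.+1) (f_neq0 n) (g_neq0 n) (f_neq0 n.+1) (f_neq1 n.+1)
    (p_neq0 n) (ps_neq0 n) (eq_f n).
  by rewrite natr1; apply; exact: (eq_g n.+1).
- have := pmap_pred (a := alpha) (s := s) (f1 := f n.+1) (g1 := g n.+1)
    (f_neq0 n) (g_neq0 n) (d_neq0 n).
  by rewrite natr1; apply; [exact: q_neq0 | exact: q_neq1 | exact: eq_f | exact: (eq_g n.+1)].
Qed.
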